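(* Let $\mathsf{R}:\widetilde{\mathcal{C}}\to\mathcal{C}$ be a Frobenius extension of an abelian category $\mathcal{C}$, with left adjoint $\mathsf{I}$ and right adjoint $\mathsf{C}$ of $\mathsf{R}$. Then $\widetilde{\mathcal{C}}$ has enough projective objects if and only if $\mathcal{C}$ has enough projective objects. If there are enough projective objects, then (i) the projective objects of $\mathcal{C}$ are exactly the direct summands of objects $\mathsf{R}P$ with $P$ projective in $\widetilde{\mathcal{C}}$; (ii) the projective objects of $\widetilde{\mathcal{C}}$ are exactly the direct summands of objects $\mathsf{I}P$ (equivalently, of objects $\mathsf{C}P$) with $P$ projective in $\mathcal{C}$. The same statements hold with ''projective'' replaced by ''injective'' throughout.
   Context: A Frobenius extension of an abelian category $\mathcal{C}$ is an abelian category $\widetilde{\mathcal{C}}$ together with an additive functor $\mathsf{R}:\widetilde{\mathcal{C}}\to\mathcal{C}$ such that (i) $\mathsf{R}$ has a left adjoint $\mathsf{I}$ and a right adjoint $\mathsf{C}$; (ii) $\mathsf{R},\mathsf{I},\mathsf{C}$ are faithful; (iii) $\mathsf{I}\cong\mathsf{C}\circ\mathsf{E}$ for some auto-equivalence $\mathsf{E}$ of $\mathcal{C}$. *)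

From HB Require Import structures.
From mathcomp Require Import all_boot all_algebra.
Set Implicit Arguments. Unset Strict Implicit. Unset Printing Implicit Defensive.
Import GRing.Theory.
Local Open Scope ring_scope.

(* A preadditive category: hom-sets are abelian groups, composition is
   bilinear. comp g f is "g after f" for f : a -> b, g : b -> c. *)
Record category := Category {
  ob :> Type;
  hom : ob -> ob -> zmodType;
  idm : forall a, hom a a;
  comp : forall a b c, hom b c -> hom a b -> hom a c;
  comp_idl : forall a b (f : hom a b), comp (idm b) f = f;
  comp_idr : forall a b (f : hom a b), comp f (idm a) = f;
  comp_assoc : forall a b c d (h : hom c d) (g : hom b c) (f : hom a b),
      comp h (comp g f) = comp (comp h g) f;
  comp_addl : forall a b c (g g' : hom b c) (f : hom a b),
      comp (g + g') f = comp g f + comp g' f;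
  comp_addr : forall a b c (g : hom b c) (f f' : hom a b),
      comp g (f + f') = comp g f + comp g f'
}.
Arguments idm {C} a : rename.
Arguments comp {C a b c} g f : rename.

Section CatDefs.
Variable C : category.

Definition monic (a b : C) (f : hom a b) :=
  forall (x : C) (g h : hom x a), comp f g = comp f h -> g = h.
Definition epic (a b : C) (f : hom a b) :=
  forall (x : C) (g h : hom b x), comp g f = comp h f -> g = h.
Definition is_iso (a b : C) (f : hom a b) :=
  exists g : hom b a, comp g f = idm a /\ comp f g = idm b.

Definition has_zero_object :=
  exists z : C, (forall (a : C) (f : hom z a), f = 0) /\
                (forall (a : C) (f : hom a z), f = 0).

(* binary products (= biproducts in a preadditive category) *)
Definition is_product (a b p : C) (pa : hom p a) (pb : hom p b) :=
  forall (x : C) (f : hom x a) (g : hom x b),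
    exists u : hom x p, (comp pa u = f /\ comp pb u = g) /\
      forall v : hom x p, comp pa v = f -> comp pb v = g -> v = u.
Definition has_binary_products :=
  forall a b : C, exists p (pa : hom p a) (pb : hom p b), is_product pa pb.

Definition is_kernel (a b k : C) (f : hom a b) (i : hom k a) :=
  comp f i = 0 /\
  forall (x : C) (g : hom x a), comp f g = 0 ->
    exists u : hom x k, comp i u = g /\
      forall v : hom x k, comp i v = g -> v = u.
Definition is_cokernel (a b q : C) (f : hom a b) (p : hom b q) :=
  comp p f = 0 /\
  forall (x : C) (g : hom b x), comp g f = 0 ->
    exists u : hom q x, comp u p = g /\
      forall v : hom q x, comp v p = g -> v = u.

Definition abelian :=
  has_zero_object /\ has_binary_products /\
      (forall (a b : C) (f : hom a b), exists k (i : hom k a), is_kernel f i) /\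
      (forall (a b : C) (f : hom a b), exists q (p : hom b q), is_cokernel f p) /\
      (forall (k a : C) (i : hom k a), monic i ->
          exists b (f : hom a b), is_kernel f i) /\
      (forall (b q : C) (p : hom b q), epic p ->
          exists a (f : hom a b), is_cokernel f p).

Definition projective_obj (P : C) :=
  forall (a b : C) (e : hom a b), epic e ->
    forall f : hom P b, exists g : hom P a, comp e g = f.
Definition injective_obj (Q : C) :=
  forall (a b : C) (m : hom a b), monic m ->
    forall f : hom a Q, exists g : hom b Q, comp g m = f.

Definition enough_projectives :=
  forall X : C, exists P (e : hom P X), projective_obj P /\ epic e.
Definition enough_injectives :=
  forall X : C, exists Q (m : hom X Q), injective_obj Q /\ monic m.

Definition direct_summand (X Y : C) :=
  exists (i : hom X Y) (p : hom Y X), comp p i = idm X.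
End CatDefs.

Record functor (C D : category) := Functor {
  fobj :> C -> D;
  fmap : forall a b : C, hom a b -> hom (fobj a) (fobj b);
  fmap_id : forall a, fmap (idm a) = idm (fobj a);
  fmap_comp : forall a b c (g : hom b c) (f : hom a b),
      fmap (comp g f) = comp (fmap g) (fmap f)
}.
Arguments fmap {C D} F {a b} f : rename.

Definition additive_functor (C D : category) (F : functor C D) :=
  forall (a b : C) (f g : hom a b), fmap F (f + g) = fmap F f + fmap F g.

Definition faithful (C D : category) (F : functor C D) :=
  forall (a b : C) (f g : hom a b), fmap F f = fmap F g -> f = g.

Definition functor_id (C : category) : functor C C :=
  @Functor C C id (fun a b f => f) (fun a => erefl) (fun a b c g f => erefl).

Lemma functor_comp_id (C D E : category) (G : functor D E) (F : functor C D) a :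
  fmap G (fmap F (idm a)) = idm (G (F a)).
Proof. by rewrite !fmap_id. Qed.
Lemma functor_comp_comp (C D E : category) (G : functor D E) (F : functor C D)
  a b c (g : hom b c) (f : hom a b) :
  fmap G (fmap F (comp g f)) = comp (fmap G (fmap F g)) (fmap G (fmap F f)).
Proof. by rewrite !fmap_comp. Qed.

Definition functor_comp (C D E : category) (G : functor D E) (F : functor C D)
  : functor C E :=
  @Functor C E (fun a => G (F a)) (fun a b f => fmap G (fmap F f))
    (functor_comp_id G F) (functor_comp_comp G F).

Definition nat_iso (C D : category) (F G : functor C D) :=
  exists alpha : forall a : C, hom (F a) (G a),
    (forall a, is_iso (alpha a)) /\
    forall (a b : C) (f : hom a b),
      comp (fmap G f) (alpha a) = comp (alpha b) (fmap F f).

Definition auto_equivalence (C : category) (E : functor C C) :=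
  exists F : functor C C,
    nat_iso (functor_comp E F) (functor_id C) /\
    nat_iso (functor_comp F E) (functor_id C).

Definition adjunction (C D : category) (L : functor C D) (R : functor D C) :=
  exists phi : forall (a : C) (b : D), hom (L a) b -> hom a (R b),
    (forall a b, bijective (phi a b)) /\
    forall (a a' : C) (b b' : D) (h : hom a' a) (f : hom (L a) b) (g : hom b b'),
      phi a' b' (comp g (comp f (fmap L h))) = comp (fmap R g) (comp (phi a b f) h).

Definition frobenius_extension (Ct C : category) (R : functor Ct C)
  (I Cf : functor C Ct) :=
  abelian Ct /\ abelian C /\ additive_functor R /\
  adjunction I R /\ adjunction R Cf /\
  faithful R /\ faithful I /\ faithful Cf /\
  exists E : functor C C,
    auto_equivalence E /\ nat_iso I (functor_comp Cf E).

(* Write L -| R -| M for I -| R -| C, and F for a quasi-inverse of E, so that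
   L ~= M E and M ~= L F.  Each of L, R, M has a right adjoint that preserves
   epimorphisms (R because it is itself a left adjoint, M because M ~= L F),
   hence each preserves projectives.  Since R and M are faithful, the counits
   L R Y -> Y and R M X -> X are epic; applying L (resp. R) to a projective
   cover of R Y (resp. M X) therefore yields a projective cover of Y (resp. X),
   and a projective Y is a retract of it.  Summands of the L P and of the M P
   agree because L P ~= M (E P) and M P ~= L (F P).  Injectives are the
   projectives of the opposite categories, where op M -| op R -| op L is a
   triple of the same kind. *)
From mathcomp Require Import all_boot all_algebra.
From Stdlib Require Import IndefiniteDescription Setoid.

Set Implicit Arguments.
Unset Strict Implicit.
Unset Printing Implicit Defensive.

Section Morphisms.
Variable C : category.
Implicit Types a b c : C.

Lemma retraction_epic a b (g : hom a b) (f : hom b a) : comp g f = idm b -> epic g.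
Proof. by move=> gf x u v eq_ug; rewrite -(comp_idr u) -(comp_idr v) -gf !comp_assoc eq_ug. Qed.

Lemma section_monic a b (f : hom a b) (g : hom b a) : comp g f = idm a -> monic f.
Proof. by move=> gf x u v eq_fu; rewrite -(comp_idl u) -(comp_idl v) -gf -!comp_assoc eq_fu. Qed.

Lemma iso_epic a b (f : hom a b) : is_iso f -> epic f.
Proof. by case=> g [_ fg]; apply: retraction_epic fg. Qed.

Lemma iso_monic a b (f : hom a b) : is_iso f -> monic f.
Proof. by case=> g [gf _]; apply: section_monic gf. Qed.

Lemma epic_comp a b c (g : hom b c) (f : hom a b) : epic g -> epic f -> epic (comp g f).
Proof. by move=> epic_g epic_f x u v; rewrite !comp_assoc => /epic_f /epic_g. Qed.

Lemma epic_compl a b c (g : hom b c) (f : hom a b) : epic (comp g f) -> epic g.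
Proof. by move=> epic_gf x u v eq_ug; apply: epic_gf; rewrite !comp_assoc eq_ug. Qed.

Lemma iso_comp a b c (g : hom b c) (f : hom a b) : is_iso g -> is_iso f -> is_iso (comp g f).
Proof.
case=> g' [g'g gg'] [f' [f'f ff']]; exists (comp f' g'); split.
  by rewrite comp_assoc -(comp_assoc f') g'g comp_idr.
by rewrite comp_assoc -(comp_assoc g) ff' comp_idr.
Qed.

Lemma iso_direct_summand a b (f : hom a b) : is_iso f -> direct_summand a b.
Proof. by case=> g [gf _]; exists f, g. Qed.

Lemma direct_summand_trans a b c :
  direct_summand a b -> direct_summand b c -> direct_summand a c.
Proof.
case=> i [p pi] [j [q qj]]; exists (comp j i), (comp p q).
by rewrite comp_assoc -(comp_assoc p) qj comp_idr.
Qed.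

Lemma projective_direct_summand a b :
  projective_obj b -> direct_summand a b -> projective_obj a.
Proof.
move=> proj_b [i [p pi]] x y e epic_e f.
have [g eg] := proj_b _ _ e epic_e (comp f p).
by exists (comp g i); rewrite comp_assoc eg -comp_assoc pi comp_idr.
Qed.

Lemma projective_split a b (e : hom a b) :
  projective_obj b -> epic e -> direct_summand b a.
Proof. by move=> proj_b epic_e; have [g eg] := proj_b _ _ e epic_e (idm b); exists g, e. Qed.

End Morphisms.

Definition preserves_epics (C D : category) (F : functor C D) :=
  forall (a b : C) (e : hom a b), epic e -> epic (fmap F e).

Definition full (C D : category) (F : functor C D) :=
  forall (a b : C) (g : hom (F a) (F b)), exists f : hom a b, fmap F f = g.

Section Functors.
Variables C D E : category.

Lemma fmap_iso (F : functor C D) (a b : C) (f : hom a b) : is_iso f -> is_iso (fmap F f).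
Proof. by case=> g [gf fg]; exists (fmap F g); rewrite -!fmap_comp gf fg !fmap_id. Qed.

Lemma faithful_epic (F : functor C D) (a b : C) (f : hom a b) :
  faithful F -> epic (fmap F f) -> epic f.
Proof.
by move=> faithF epic_Ff x u v /(congr1 (fmap F)); rewrite !fmap_comp => /epic_Ff /faithF.
Qed.

Lemma faithful_comp (G : functor D E) (F : functor C D) :
  faithful G -> faithful F -> faithful (functor_comp G F).
Proof. by move=> faithG faithF a b f g /= /faithG /faithF. Qed.

Lemma faithful_compr (G : functor D E) (F : functor C D) :
  faithful (functor_comp G F) -> faithful F.
Proof. by move=> faithGF a b f g eq_Ffg; apply: faithGF => /=; rewrite eq_Ffg. Qed.

Lemma preserves_epics_comp (G : functor D E) (F : functor C D) :
  preserves_epics G -> preserves_epics F -> preserves_epics (functor_comp G F).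
Proof. by move=> epicG epicF a b e /epicF /epicG. Qed.

Lemma full_faithful_reflects_projective (F : functor C D) (X : C) :
  full F -> faithful F -> preserves_epics F -> projective_obj (F X) -> projective_obj X.
Proof.
move=> fullF faithF epicF projFX a b e epic_e f.
have [g eg] := projFX _ _ _ (epicF _ _ _ epic_e) (fmap F f).
have [g' Fg'] := fullF _ _ g.
by exists g'; apply: faithF; rewrite fmap_comp Fg'.
Qed.

End Functors.

Section NaturalIsos.
Variables C D E : category.
Implicit Types G H K : functor C D.

Lemma nat_iso_sym G H : nat_iso G H -> nat_iso H G.
Proof.
case=> alpha [iso_alpha nat_alpha].
have inv a : {beta | comp beta (alpha a) = idm (G a) /\ comp (alpha a) beta = idm (H a)}.
  exact: constructive_indefinite_description (iso_alpha a).
exists (fun a => sval (inv a)); split=> [a | a b f] /=.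
  by case: (inv a) => beta [beta_alpha alpha_beta]; exists (alpha a).
case: (inv a) (inv b) => [beta_a [_ alpha_beta_a]] [beta_b [beta_alpha_b _]] /=.
by rewrite -[RHS]comp_idr -alpha_beta_a comp_assoc -(comp_assoc beta_b) nat_alpha
  comp_assoc beta_alpha_b comp_idl.
Qed.

Lemma nat_iso_trans G H K : nat_iso G H -> nat_iso H K -> nat_iso G K.
Proof.
case=> alpha [iso_alpha nat_alpha] [beta [iso_beta nat_beta]].
exists (fun a => comp (beta a) (alpha a)); split=> [a | a b f]; first exact: iso_comp.
by rewrite comp_assoc nat_beta -comp_assoc nat_alpha comp_assoc.
Qed.

Lemma nat_iso_whiskerl (F : functor D E) G H :
  nat_iso G H -> nat_iso (functor_comp F G) (functor_comp F H).
Proof.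
case=> alpha [iso_alpha nat_alpha]; exists (fun a => fmap F (alpha a)).
by split=> [a | a b f /=]; [exact: fmap_iso (iso_alpha a) | rewrite -!fmap_comp nat_alpha].
Qed.

Lemma nat_iso_whiskerr (F : functor E C) G H :
  nat_iso G H -> nat_iso (functor_comp G F) (functor_comp H F).
Proof.
case=> alpha [iso_alpha nat_alpha]; exists (fun a => alpha (F a)).
by split=> [a | a b f]; [exact: iso_alpha | exact: nat_alpha].
Qed.

Lemma nat_iso_direct_summand G H a : nat_iso G H -> direct_summand (G a) (H a).
Proof. by case=> alpha [iso_alpha _]; exact: iso_direct_summand (iso_alpha a). Qed.

Lemma nat_iso_faithful G H : nat_iso G H -> faithful H -> faithful G.
Proof.
case=> alpha [iso_alpha nat_alpha] faithH a b f g eq_Gfg; apply: faithH.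
by apply: (iso_epic (iso_alpha a)); rewrite !nat_alpha eq_Gfg.
Qed.

Lemma nat_iso_preserves_epics G H : nat_iso G H -> preserves_epics G -> preserves_epics H.
Proof.
case=> alpha [iso_alpha nat_alpha] epicG a b e epic_e.
apply: (@epic_compl _ _ _ _ _ (alpha a)); rewrite nat_alpha.
exact: epic_comp (iso_epic (iso_alpha b)) (epicG _ _ _ epic_e).
Qed.

End NaturalIsos.

Section QuasiInverse.
Variables (C D : category) (F : functor C D) (G : functor D C).
Hypothesis GF : nat_iso (functor_comp G F) (functor_id C).

Lemma quasi_inverse_faithful : faithful F.
Proof. by apply: (@faithful_compr _ _ _ G); apply: nat_iso_faithful GF _ => a b f g /=. Qed.

Hypothesis faithG : faithful G.

Lemma quasi_inverse_full : full F.
Proof.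
case: GF => beta [iso_beta nat_beta] a b g.
have [beta' [beta'_beta _]] := iso_beta a.
exists (comp (beta b) (comp (fmap G g) beta')); apply: faithG.
apply: (iso_monic (iso_beta b)); rewrite -[LHS]nat_beta /=.
by rewrite -!comp_assoc beta'_beta comp_idr.
Qed.

Lemma quasi_inverse_preserves_epics : preserves_epics F.
Proof.
have epicGF : preserves_epics (functor_comp G F).
  by apply: nat_iso_preserves_epics (nat_iso_sym GF) _ => a b e.
by move=> a b e /epicGF /(faithful_epic faithG).
Qed.

End QuasiInverse.

Lemma equivalence_projective (C D : category) (F : functor C D) (G : functor D C) :
  nat_iso (functor_comp G F) (functor_id C) -> nat_iso (functor_comp F G) (functor_id D) ->
  forall P : D, projective_obj P -> projective_obj (G P).
Proof.
move=> GF FG P projP; have faithG := quasi_inverse_faithful FG.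
apply: (full_faithful_reflects_projective (quasi_inverse_full GF faithG)
          (quasi_inverse_faithful GF) (quasi_inverse_preserves_epics GF faithG)).
exact: projective_direct_summand projP (nat_iso_direct_summand P FG).
Qed.

Definition projectives_are_summands_of (C D : category) (F : functor C D) :=
  forall X : D, projective_obj X <-> exists P : C, projective_obj P /\ direct_summand X (F P).

Definition injectives_are_summands_of (C D : category) (F : functor C D) :=
  forall X : D, injective_obj X <-> exists Q : C, injective_obj Q /\ direct_summand X (F Q).

Section Adjunction.
Variables (C D : category) (L : functor C D) (R : functor D C).
Hypothesis adjLR : adjunction L R.

Lemma adjunction_transposes :
  exists (phi : forall a b, hom (L a) b -> hom a (R b))
         (psi : forall a b, hom a (R b) -> hom (L a) b),
  [/\ forall a b, cancel (phi a b) (psi a b),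
      forall a b, cancel (psi a b) (phi a b),
      forall a b b' (f : hom (L a) b) (g : hom b b'),
        phi a b' (comp g f) = comp (fmap R g) (phi a b f)
    & forall a a' b (h : hom a' a) (f : hom (L a) b),
        phi a' b (comp f (fmap L h)) = comp (phi a b f) h].
Proof.
case: adjLR => phi [bij_phi nat_phi].
have inv a b : {psi | cancel (phi a b) psi /\ cancel psi (phi a b)}.
  by apply: constructive_indefinite_description; case: (bij_phi a b) => psi; exists psi.
exists phi, (fun a b => sval (inv a b)); split.
- by move=> a b; case: (svalP (inv a b)).
- by move=> a b; case: (svalP (inv a b)).
- by move=> a b b' f g; have := nat_phi a a b b' (idm a) f g; rewrite fmap_id !comp_idr.
- by move=> a a' b h f; have := nat_phi a a' b b h f (idm b); rewrite fmap_id !comp_idl.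
Qed.

Lemma left_adjoint_preserves_epics : preserves_epics L.
Proof.
have [phi [psi [phiK _ _ nat_phi]]] := adjunction_transposes.
move=> a b e epic_e x u v /(congr1 (phi a x)); rewrite !nat_phi => /epic_e.
exact: (can_inj (phiK b x)).
Qed.

Lemma left_adjoint_projective (P : C) :
  preserves_epics R -> projective_obj P -> projective_obj (L P).
Proof.
have [phi [psi [phiK psiK nat_phi _]]] := adjunction_transposes.
move=> epicR projP a b e epic_e f.
have [g eg] := projP _ _ _ (epicR _ _ _ epic_e) (phi _ _ f).
by exists (psi _ _ g); apply: (can_inj (phiK _ _)); rewrite nat_phi psiK eg.
Qed.

Lemma counit_epic (Y : D) : faithful R -> exists eps : hom (L (R Y)) Y, epic eps.
Proof.
have [phi [psi [_ psiK nat_phi _]]] := adjunction_transposes.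
move=> faithR; exists (psi _ _ (idm (R Y))) => x u v /(congr1 (phi _ x)).
by rewrite !nat_phi psiK !comp_idr => /faithR.
Qed.

Lemma left_adjoint_epic_cover (Y : D) : faithful R -> enough_projectives C ->
  exists P, projective_obj P /\ exists e : hom (L P) Y, epic e.
Proof.
move=> faithR enoughC; have [P [e [projP epic_e]]] := enoughC (R Y).
have [eps epic_eps] := counit_epic Y faithR.
exists P; split=> //; exists (comp eps (fmap L e)).
exact: epic_comp epic_eps (left_adjoint_preserves_epics epic_e).
Qed.

Lemma enough_projectives_left_adjoint :
  faithful R -> preserves_epics R -> enough_projectives C -> enough_projectives D.
Proof.
move=> faithR epicR enoughC Y.
have [P [projP [e epic_e]]] := left_adjoint_epic_cover Y faithR enoughC.
by exists (L P), e; split=> //; exact: left_adjoint_projective.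
Qed.

Lemma left_adjoint_summands :
  faithful R -> preserves_epics R -> enough_projectives C -> projectives_are_summands_of L.
Proof.
move=> faithR epicR enoughC Y; split=> [projY | [P [projP sumY]]].
  have [P [projP [e epic_e]]] := left_adjoint_epic_cover Y faithR enoughC.
  by exists P; split=> //; exact: projective_split projY epic_e.
exact: projective_direct_summand (left_adjoint_projective epicR projP) sumY.
Qed.

End Adjunction.

Definition op_cat (C : category) : category :=
  @Category C (fun a b => hom b a) (@idm C) (fun a b c g f => comp f g)
    (fun a b f => comp_idr f) (fun a b f => comp_idl f)
    (fun a b c d h g f => esym (comp_assoc f g h))
    (fun a b c g g' f => comp_addr f g g') (fun a b c g f f' => comp_addl f f' g).

Definition op_fun (C D : category) (F : functor C D) : functor (op_cat C) (op_cat D) :=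
  @Functor (op_cat C) (op_cat D) F (fun a b f => fmap F f)
    (fmap_id F) (fun a b c g f => fmap_comp F f g).

Lemma projective_op (C : category) (P : C) :
  @projective_obj (op_cat C) P <-> injective_obj P.
Proof. by split=> projP a b m monic_m f; have [g gm] := projP b a m monic_m f; exists g. Qed.

Lemma direct_summand_op (C : category) (X Y : C) :
  @direct_summand (op_cat C) X Y <-> direct_summand X Y.
Proof. by split=> -[i [p pi]]; exists p, i. Qed.

Lemma enough_projectives_op (C : category) : enough_projectives (op_cat C) <-> enough_injectives C.
Proof.
by split=> enough X; have [Q [m [projQ monic_m]]] := enough X;
  exists Q, m; split=> //; apply/projective_op.
Qed.

Lemma nat_iso_op (C D : category) (G H : functor C D) :
  nat_iso G H -> nat_iso (op_fun H) (op_fun G).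
Proof.
case=> alpha [iso_alpha nat_alpha]; exists alpha; split=> [a | a b f].
  by have [beta [beta_alpha alpha_beta]] := iso_alpha a; exists beta.
exact: esym (nat_alpha b a f).
Qed.

Lemma auto_equivalence_op (C : category) (E : functor C C) :
  auto_equivalence E -> auto_equivalence (op_fun E).
Proof.
case=> F [EF FE]; exists (op_fun F).
by split; [exact: nat_iso_op (nat_iso_sym EF) | exact: nat_iso_op (nat_iso_sym FE)].
Qed.

Lemma adjunction_op (C D : category) (L : functor C D) (R : functor D C) :
  adjunction L R -> adjunction (op_fun R) (op_fun L).
Proof.
move=> /adjunction_transposes [phi [psi [phiK psiK nat_phi_r nat_phi_l]]].
exists (fun b a => psi a b); split=> [b a | b b' a a' h f g /=].
  by exists (phi a b).
by apply: (can_inj (phiK _ _)); rewrite psiK nat_phi_l nat_phi_r psiK.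
Qed.

Lemma summands_op (C D : category) (F : functor C D) :
  projectives_are_summands_of (op_fun F) <-> injectives_are_summands_of F.
Proof.
rewrite /projectives_are_summands_of /injectives_are_summands_of.
by setoid_rewrite projective_op; setoid_rewrite direct_summand_op.
Qed.

Definition frobenius_triple (D C : category) (R : functor D C) (L M : functor C D) :=
  [/\ adjunction L R, adjunction R M, faithful R, faithful M &
      exists E, auto_equivalence E /\ nat_iso L (functor_comp M E)].

Section Frobenius.
Variables (D C : category) (R : functor D C) (L M : functor C D) (E F : functor C C).
Hypotheses (adjLR : adjunction L R) (adjRM : adjunction R M).
Hypotheses (faithR : faithful R) (faithM : faithful M).
Hypotheses (EF : nat_iso (functor_comp E F) (functor_id C))
           (FE : nat_iso (functor_comp F E) (functor_id C)).
Hypothesis LME : nat_iso L (functor_comp M E).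

Lemma frobenius_nat_iso_LF : nat_iso (functor_comp L F) M.
Proof. exact: nat_iso_trans (nat_iso_whiskerr F LME) (nat_iso_whiskerl M EF). Qed.

Lemma frobenius_preserves_epics_M : preserves_epics M.
Proof.
apply: nat_iso_preserves_epics frobenius_nat_iso_LF _.
apply: preserves_epics_comp (left_adjoint_preserves_epics adjLR) _.
exact: quasi_inverse_preserves_epics EF (quasi_inverse_faithful FE).
Qed.

Lemma frobenius_projective_M (P : C) : projective_obj P -> projective_obj (M P).
Proof.
move=> projP; have projFP := equivalence_projective FE EF projP.
have projLFP := left_adjoint_projective adjLR (left_adjoint_preserves_epics adjRM) projFP.
exact: projective_direct_summand projLFP
  (nat_iso_direct_summand P (nat_iso_sym frobenius_nat_iso_LF)).
Qed.

Lemma frobenius_projectives :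
  (enough_projectives D <-> enough_projectives C) /\
  (enough_projectives C -> [/\ projectives_are_summands_of R,
     projectives_are_summands_of L & projectives_are_summands_of M]).
Proof.
have epicR := left_adjoint_preserves_epics adjRM.
have epicM := frobenius_preserves_epics_M.
have enoughCD := enough_projectives_left_adjoint adjLR faithR epicR.
split; first by split=> //; exact: enough_projectives_left_adjoint adjRM faithM epicM.
move=> enoughC; have sumL := left_adjoint_summands adjLR faithR epicR enoughC.
split=> //; first exact: left_adjoint_summands adjRM faithM epicM (enoughCD enoughC).
move=> Y; split=> [/sumL [P [projP sumY]] | [P [projP sumY]]].
  exists (E P); split; first exact: (equivalence_projective EF FE projP).
  exact: direct_summand_trans sumY (nat_iso_direct_summand P LME).
exact: projective_direct_summand (frobenius_projective_M projP) sumY.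
Qed.

Lemma frobenius_op : frobenius_triple (op_fun R) (op_fun M) (op_fun L).
Proof.
have faithL := nat_iso_faithful LME (faithful_comp faithM (quasi_inverse_faithful FE)).
split; [exact: adjunction_op | exact: adjunction_op | by move=> a b; apply: faithR
       | by move=> a b; apply: faithL | ].
exists (op_fun F); split; last exact: nat_iso_op frobenius_nat_iso_LF.
by apply: auto_equivalence_op; exists E.
Qed.

End Frobenius.

Lemma frobenius_triple_projectives (D C : category) (R : functor D C) (L M : functor C D) :
  frobenius_triple R L M ->
  (enough_projectives D <-> enough_projectives C) /\
  (enough_projectives C -> [/\ projectives_are_summands_of R,
     projectives_are_summands_of L & projectives_are_summands_of M]).
Proof.
case=> adjLR adjRM faithR faithM [E [[F [EF FE]] LME]].
exact: (frobenius_projectives adjLR adjRM faithR faithM EF FE LME).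
Qed.

Lemma frobenius_triple_op (D C : category) (R : functor D C) (L M : functor C D) :
  frobenius_triple R L M -> frobenius_triple (op_fun R) (op_fun M) (op_fun L).
Proof.
case=> adjLR adjRM faithR faithM [E [[F [EF FE]] LME]].
exact: (frobenius_op adjLR adjRM faithR faithM EF FE LME).
Qed.

Lemma frobenius_extension_triple (D C : category) (R : functor D C) (L M : functor C D) :
  frobenius_extension R L M -> frobenius_triple R L M.
Proof. by case=> _ [_ [_ [adjLR [adjRM [faithR [_ [faithM equivE]]]]]]]; split. Qed.

Theorem proposition2p2p1 (Ct C : category) (R : functor Ct C) (I Cf : functor C Ct) :
  frobenius_extension R I Cf ->
  (* projectives *)
  (enough_projectives Ct <-> enough_projectives C) /\
  (enough_projectives C ->
     (forall X : C, projective_obj X <->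
        exists P : Ct, projective_obj P /\ direct_summand X (R P)) /\
     (forall Y : Ct, projective_obj Y <->
        exists P : C, projective_obj P /\ direct_summand Y (I P)) /\
     (forall Y : Ct, projective_obj Y <->
        exists P : C, projective_obj P /\ direct_summand Y (Cf P))) /\
  (* injectives *)
  (enough_injectives Ct <-> enough_injectives C) /\
  (enough_injectives C ->
     (forall X : C, injective_obj X <->
        exists Q : Ct, injective_obj Q /\ direct_summand X (R Q)) /\
     (forall Y : Ct, injective_obj Y <->
        exists Q : C, injective_obj Q /\ direct_summand Y (I Q)) /\
     (forall Y : Ct, injective_obj Y <->
        exists Q : C, injective_obj Q /\ direct_summand Y (Cf Q))).
Proof.
move=> /frobenius_extension_triple frobRIC.
have [enoughP summandsP] := frobenius_triple_projectives frobRIC.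
have [enoughI summandsI] := frobenius_triple_projectives (frobenius_triple_op frobRIC).
split=> //; split; first by move=> /summandsP[sumR sumI sumCf].
split; first by split=> /enough_projectives_op/enoughI/enough_projectives_op.
move=> /enough_projectives_op/summandsI[sumR sumCf sumI].
by split; [|split]; apply/summands_op.
Qed.
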